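(* Let $m \ge 1$ and let $Z_1,\dots,Z_{m+1}$ be a finitely exchangeable sequence of Bernoulli random variables. Let $S_m = \sum_{i=1}^m Z_i$ and $S_{m+1} = \sum_{i=1}^{m+1} Z_i$. If $S_m$ is not uniformly distributed on $\{0,1,\dots,m\}$, then $S_{m+1}$ is not uniformly distributed on $\{0,1,\dots,m+1\}$.
   Context: Finitely exchangeable means the joint distribution of $(Z_1,\dots,Z_{m+1})$ is invariant under permutations of the indices. *)

From HB Require Import structures.
From mathcomp Require Import all_boot all_order all_algebra all_fingroup.
From mathcomp Require Import all_classical all_reals all_analysis.
Set Implicit Arguments. Unset Strict Implicit. Unset Printing Implicit Defensive.
Import Order.TTheory GRing.Theory Num.Theory.
Local Open Scope classical_set_scope.
Local Open Scope ring_scope.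

(* Z : 'I_n -> T -> R is a family of random variables Z_1..Z_n (indexed 0..n-1). *)

Definition bernoulli_rv d (T : measurableType d) (R : realType) (Z : T -> R) :=
  measurable_fun setT Z /\ forall w, Z w = 0 \/ Z w = 1.

Definition exchangeable d (T : measurableType d) (R : realType)
    (P : probability T R) (n : nat) (Z : 'I_n -> T -> R) :=
  forall (s : 'S_n) (A : set ('I_n -> R)),
    P [set w | A (fun i => Z (s i) w)] = P [set w | A (fun i => Z i w)].

Definition uniform_on_0N d (T : measurableType d) (R : realType)
    (P : probability T R) (N : nat) (X : T -> R) :=
  forall k : nat, (k <= N)%N -> P [set w | X w = k%:R] = ((N.+1)%:R^-1)%:E.

Definition psum (T : Type) (R : realType) (n : nat) (Z : 'I_n -> T -> R) (k : nat)
  : T -> R := fun w => \sum_(i < n | (i < k)%N) Z i w.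

(* Write S for the sum of all m+1 variables and L for the last one.  By
   exchangeability P(S = k, Z_i = 1) does not depend on i, and summing over i
   gives k P(S = k), so (m+1) P(S = k, L = 1) = k P(S = k).  Conditioning the
   partial sum S_m = S - L on the value of L then yields
     P(S_m = j) = (1 - j/(m+1)) P(S = j) + (j+1)/(m+1) P(S = j+1),
   and if S is uniform on {0,...,m+1} the right-hand side is 1/(m+1). *)

From HB Require Import structures.
From mathcomp Require Import all_boot all_order all_algebra all_fingroup.
From mathcomp Require Import all_classical all_reals all_analysis.
From mathcomp Require Import ring.
Set Implicit Arguments. Unset Strict Implicit. Unset Printing Implicit Defensive.
Import Order.TTheory GRing.Theory Num.Theory.
Local Open Scope classical_set_scope.
Local Open Scope ring_scope.

Lemma psum_full (T : Type) (R : realType) n (Z : 'I_n -> T -> R) w :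
  psum Z n w = \sum_(i < n) Z i w.
Proof. by apply: eq_bigl => i; rewrite ltn_ord. Qed.

Lemma psumS_last (T : Type) (R : realType) n (Z : 'I_n.+1 -> T -> R) w :
  psum Z n.+1 w = psum Z n w + Z ord_max w.
Proof.
rewrite psum_full big_ord_recr /=; congr (_ + _).
rewrite /psum [RHS]big_mkcond big_ord_recr /= ltnn addr0.
by apply: eq_bigr => i _; rewrite ltn_ord.
Qed.

Lemma measurable_level d (T : measurableType d) (R : realType) (f : T -> R) c :
  measurable_fun setT f -> measurable [set w | f w = c].
Proof.
by move=> /(_ measurableT [set c] (measurable_set1 c)); rewrite setTI.
Qed.

Lemma bernoulli_indic d (T : measurableType d) (R : realType) (X : T -> R) w :
  bernoulli_rv X -> \1_[set w | X w = 1] w = X w.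
Proof.
case=> _ /(_ w) [] Xw; rewrite indicE Xw; last by rewrite mem_set.
by rewrite memNset //= Xw => /eqP; rewrite eq_sym oner_eq0.
Qed.

Lemma probability_fineK d (T : measurableType d) (R : realType)
    {P : probability T R} (A : set T) :
  measurable A -> P A = (fine (P A))%:E.
Proof. by move=> mA; rewrite fineK // fin_num_measure. Qed.

Section ExchangeableBernoulli.
Context (d : measure_display) (T : measurableType d) (R : realType).
Variables (P : probability T R) (n : nat) (Z : 'I_n.+1 -> T -> R).
Hypothesis Zbern : forall i, bernoulli_rv (Z i).
Hypothesis Zexch : exchangeable P Z.

Let S := psum Z n.+1.
Let level (k : R) := [set w | S w = k].
Let hit (i : 'I_n.+1) := [set w | Z i w = 1].

Let measurable_hit i : measurable (hit i).
Proof. by apply: measurable_level; case: (Zbern i). Qed.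

Let measurable_sum_level k : measurable (level k).
Proof.
apply: measurable_level; rewrite /S (funext (psum_full Z)).
by apply: measurable_sum => i; case: (Zbern i).
Qed.

Let measurable_level_hit k i : measurable (level k `&` hit i).
Proof. exact: measurableI. Qed.

Lemma exchangeable_prob_level_hit k i j :
  P (level k `&` hit i) = P (level k `&` hit j).
Proof.
have sum_perm (s : 'S_n.+1) w : \sum_l Z (s l) w = S w.
  by rewrite /S psum_full [RHS](reindex_inj (@perm_inj _ s)).
have -> : level k `&` hit i =
    [set w | \sum_l Z (tperm i j l) w = k /\ Z i w = 1].
  by apply/seteqP; split=> w /=; rewrite sum_perm.
have -> : level k `&` hit j = [set w | \sum_l Z l w = k /\ Z j w = 1].
  by apply/seteqP; split=> w; rewrite /level /hit /= /S psum_full.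
have := Zexch (tperm i j) [set f | \sum_l f l = k /\ f j = 1].
by rewrite /= tpermR.
Qed.

Lemma sum_prob_level_hit k :
  (\sum_i P (level k `&` hit i) = k%:E * P (level k))%E.
Proof.
transitivity (\sum_i \int[P]_(w in level k) (\1_(hit i) w)%:E)%E.
  by apply: eq_bigr => i _; rewrite integral_indic // setIC.
rewrite -ge0_integral_sum //; last first.
  move=> i; apply/measurable_realfun.measurable_EFinP.
  exact: measurable_realfun.measurable_indic.
rewrite -integral_cst //; apply: eq_integral => w; rewrite inE /= => <-.
rewrite sumEFin /S psum_full; congr EFin.
by apply: eq_bigr => i _; rewrite bernoulli_indic.
Qed.

Lemma prob_level_hit_last k :
  fine (P (level k `&` hit ord_max)) = k / n.+1%:R * fine (P (level k)).
Proof.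
have := sum_prob_level_hit k.
under eq_bigr do rewrite (exchangeable_prob_level_hit _ _ ord_max)
  (probability_fineK (measurable_level_hit _ _)).
rewrite sumEFin sumr_const card_ord.
rewrite (probability_fineK (measurable_sum_level k)).
rewrite -EFinM /= => -[hk].
by rewrite mulrAC -hk -[_ *+ _]mulr_natr mulfK // pnatr_eq0.
Qed.

Lemma psum_level_split (j : nat) : [set w | psum Z n w = j%:R] =
  (level j%:R `\` hit ord_max) `|` (level j.+1%:R `&` hit ord_max).
Proof.
apply/seteqP; split => w /=; rewrite /level /hit /S /= psumS_last.
  move=> ->; case: (Zbern ord_max) => _ /(_ w) [] ->.
    by left; rewrite addr0; split=> // /esym/eqP; rewrite oner_eq0.
  by right; rewrite -natr1.
case=> -[Sw Lw].
  by case: (Zbern ord_max) => _ /(_ w) [L | /Lw //]; rewrite L addr0 in Sw.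
by rewrite Lw -natr1 in Sw; exact: addIr Sw.
Qed.

Lemma psum_law (j : nat) :
  P [set w | psum Z n w = j%:R] =
  ((1 - j%:R / n.+1%:R) * fine (P (level j%:R))
   + j.+1%:R / n.+1%:R * fine (P (level j.+1%:R)))%:E.
Proof.
have mD : measurable (level j%:R `\` hit ord_max) by exact: measurableD.
have : P (level j%:R) =
    (P (level j%:R `\` hit ord_max) + P (level j%:R `&` hit ord_max))%E.
  exact: measureDI.
rewrite (probability_fineK (measurable_sum_level _)) (probability_fineK mD).
rewrite (probability_fineK (measurable_level_hit _ _)).
rewrite prob_level_hit_last -EFinD.
move=> -[/eqP]; rewrite -subr_eq => /eqP split_j.
rewrite psum_level_split.
have -> : P ((level j%:R `\` hit ord_max) `|` (level j.+1%:R `&` hit ord_max)) =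
    (P (level j%:R `\` hit ord_max) + P (level j.+1%:R `&` hit ord_max))%E.
  by rewrite measureU // setDE setIACA setICl setI0.
rewrite (probability_fineK mD) (probability_fineK (measurable_level_hit _ _)).
by rewrite prob_level_hit_last -EFinD -split_j; congr EFin; ring.
Qed.

End ExchangeableBernoulli.

Theorem lemmaA8 (d : measure_display) (T : measurableType d) (R : realType)
    (P : probability T R) (m : nat) (Z : 'I_m.+1 -> T -> R) :
  (1 <= m)%N ->
  (forall i, bernoulli_rv (Z i)) ->
  exchangeable P Z ->
  ~ uniform_on_0N P m (psum Z m) ->
  ~ uniform_on_0N P m.+1 (psum Z m.+1).
Proof.
move=> _ Zbern Zexch not_unif_m unif_m1; apply: not_unif_m => j le_jm.
rewrite (psum_law Zbern Zexch) !unif_m1 ?(leqW le_jm) //=; congr EFin.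
by field; rewrite addrC natr1 -natrD !(@pnatr_eq0 R).
Qed.
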